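(* Let $G$ be a group and $R,L,S\subseteq G$ with $R=R^{-1}$, $L=L^{-1}$, $|R|=|L|$, and such that no element of $R\cup L$ is equal to its own inverse. If the bi-Cayley graph $\mathrm{Bi}(G,R,L,S)$ is connected, then it admits a partite presentation with exactly two vertex classes, i.e. $\mathrm{Bi}(G,R,L,S)\cong\mathrm{PCay}(P)$ for a partite presentation $P$ with $|X|=2$.
   Context: $\mathrm{Bi}(G,R,L,S)$ has vertex set $\{(g)_0,(g)_1: g\in G\}$ and edges $\{(g)_0,(gr)_0\}$ ($g\in G,r\in R$), $\{(g)_1,(gl)_1\}$ ($g\in G,l\in L$), and $\{(g)_0,(gs)_1\}$ ($g\in G, s\in S$). A partite presentation $P=\langle X\mid U\mid I\mid \phi\mid \mathcal R\rangle$ consists of: a nonempty set $X$; disjoint sets $U$, $I$ with $S':=U\cup I$; the group $MF_P:=\langle S'\mid s^2\ (s\in I)\rangle$; a map $\phi:S'\to\mathrm{Sym}(X)$ such that $\phi(s)$ is a fixed-point-free involution for each $s\in I$ and the $\phi(s)$ generate a subgroup acting transitively on $X$; and for each $x\in X$ a set $\mathcal R_x\subseteq MF_P$ of words $s_1\cdots s_n$ ($s_i\in S'\cup S'^{-1}$, $\phi(s^{-1}):=\phi(s)^{-1}$) with $\phi(s_n)\circ\cdots\circ\phi(s_1)(x)=x$. The presentation graph $C(P)$ has vertex set $X$; for each $s\in U$ and $x\in X$ one edge from $x$ to $\phi(s)(x)$, its orientation from $x$ to $\phi(s)(x)$ labelled $s$ and reverse labelled $s^{-1}$; for each $s\in I$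 and each pair $\{x,\phi(s)(x)\}$ one edge with both orientations labelled $s$. The presentation complex $\mathcal C(P)$ is $C(P)$ with, for every $x\in X$ and $r=s_1\cdots s_n\in\mathcal R_x$, a 2-cell attached along the closed walk from $x$ successively traversing the outgoing edges labelled $s_1,\dots,s_n$. $\mathrm{PCay}(P)$ is the 1-skeleton of the universal cover of $\mathcal C(P)$. *)

From Stdlib Require Import List Relations.
Import ListNotations.

Definition is_group {G : Type} (mul : G -> G -> G) (one : G) (inv : G -> G) : Prop :=
  (forall a b c, mul a (mul b c) = mul (mul a b) c) /\
  (forall a, mul one a = a) /\ (forall a, mul a one = a) /\
  (forall a, mul (inv a) a = one) /\ (forall a, mul a (inv a) = one).

Definition equipotent {T : Type} (A B : T -> Prop) : Prop :=
  exists (f : {x | A x} -> {x | B x}) (g : {x | B x} -> {x | A x}),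
    (forall x, g (f x) = x) /\ (forall y, f (g y) = y).

(* vertex (g, false) = (g)_0 ; vertex (g, true) = (g)_1 ; adjacency = {v,w} is an edge *)
Definition bi_adj {G : Type} (mul : G -> G -> G) (R L S : G -> Prop)
  (v w : G * bool) : Prop :=
  (exists g r, R r /\ ((v = (g, false) /\ w = (mul g r, false)) \/
                       (v = (mul g r, false) /\ w = (g, false)))) \/
  (exists g l, L l /\ ((v = (g, true) /\ w = (mul g l, true)) \/
                       (v = (mul g l, true) /\ w = (g, true)))) \/
  (exists g s, S s /\ ((v = (g, false) /\ w = (mul g s, true)) \/
                       (v = (mul g s, true) /\ w = (g, false)))).

Definition bi_connected {G : Type} (mul : G -> G -> G) (R L S : G -> Prop) : Prop :=
  forall v w : G * bool, clos_refl_trans _ (bi_adj mul R L S) v w.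

(* Letters of words in S' ∪ S'^{-1}: a generator of U with a sign (true = s, false = s^{-1}),
   or a generator of I (s^{-1} = s in MF_P). *)
Inductive letter (U I : Type) : Type :=
| LU : U -> bool -> letter U I
| LI : I -> letter U I.
Arguments LU {U I}.
Arguments LI {U I}.

Definition linv {U I : Type} (l : letter U I) : letter U I :=
  match l with LU u b => LU u (negb b) | LI i => LI i end.

(* Data of a presentation  <X | U | I | phi | R>.  phi(s) for s in U is given as a
   bijection phiU s together with its inverse phiUinv s. Relators R_x are given by words. *)
Record ppres := {
  pX : Type;
  pU : Type;
  pI : Type;
  phiU : pU -> pX -> pX;
  phiUinv : pU -> pX -> pX;
  phiI : pI -> pX -> pX;
  rels : pX -> list (letter pU pI) -> Prop
}.

Definition step (P : ppres) (x : pX P) (l : letter (pU P) (pI P)) : pX P :=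
  match l with
  | LU u true => phiU P u x
  | LU u false => phiUinv P u x
  | LI i => phiI P i x
  end.

(* act x [s1;...;sn] = phi(sn) o ... o phi(s1) (x) = endpoint of the walk from x *)
Fixpoint act (P : ppres) (x : pX P) (w : list (letter (pU P) (pI P))) : pX P :=
  match w with
  | [] => x
  | l :: w' => act P (step P x l) w'
  end.

Definition partite_presentation (P : ppres) : Prop :=
  inhabited (pX P) /\
  (forall u x, phiUinv P u (phiU P u x) = x) /\
  (forall u x, phiU P u (phiUinv P u x) = x) /\
  (forall i x, phiI P i (phiI P i x) = x) /\
  (forall i x, phiI P i x <> x) /\
  (forall x y, exists w, act P x w = y) /\
  (forall x r, rels P x r -> act P x r = x).

(* ---------- PCay(P): 1-skeleton of the universal cover of the presentation complex ----------
   Vertices of the universal cover (based at x0) are walks from x0 in C(P) (= words,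
   since each vertex has exactly one outgoing edge with each label) modulo homotopy:
   removing a backtrack l l^{-1}, and removing a relator loop r in R_y at a point where
   the walk is at y; plus symmetric/transitive closure. *)
Inductive hstep (P : ppres) (x0 : pX P) :
  list (letter (pU P) (pI P)) -> list (letter (pU P) (pI P)) -> Prop :=
| hs_back : forall u v l, hstep P x0 (u ++ l :: linv l :: v) (u ++ v)
| hs_rel : forall u r v, rels P (act P x0 u) r -> hstep P x0 (u ++ r ++ v) (u ++ v).

Definition hequiv (P : ppres) (x0 : pX P) :=
  clos_refl_sym_trans _ (hstep P x0).

Definition pcay_adj (P : ppres) (x0 : pX P) (w v : list (letter (pU P) (pI P))) : Prop :=
  exists l, hequiv P x0 (w ++ [l]) v.

(* PCay(P) has no loops and no parallel edges: the distinct oriented edges leaving a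
   vertex [w] (one per letter) lead to pairwise distinct vertices different from [w]. *)
Definition pcay_simple (P : ppres) (x0 : pX P) : Prop :=
  (forall w l, ~ hequiv P x0 (w ++ [l]) w) /\
  (forall w l l', l <> l' -> ~ hequiv P x0 (w ++ [l]) (w ++ [l'])).

(* graph isomorphism Bi(G,R,L,S) ~= PCay(P) (vertices of PCay are hequiv-classes) *)
Definition bi_iso_pcay {G : Type} (mul : G -> G -> G) (R L S : G -> Prop)
  (P : ppres) (x0 : pX P) : Prop :=
  exists f : G * bool -> list (letter (pU P) (pI P)),
    (forall w, exists v, hequiv P x0 (f v) w) /\
    (forall v v', hequiv P x0 (f v) (f v') -> v = v') /\
    (forall v v', bi_adj mul R L S v v' <-> pcay_adj P x0 (f v) (f v')).

Definition has_two_elements (X : Type) : Prop :=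
  exists a b : X, a <> b /\ forall x, x = a \/ x = b.

(* Choose one element from each pair {r, r^-1} of R and from each pair
   {l, l^-1} of L, both indexed by one set U (possible since |R| = |L|).  Let the
   generators in U fix 0 and 1 (u acts as rho u on side 0 and as lam u on side 1),
   let every s in S be an involution swapping 0 and 1, and take as relators at x
   ALL closed walks of Bi based at (1, x).  Words then act on vertices of Bi, two
   words are homotopic iff their walks from (1, x0) end at the same vertex, and
   connectivity of Bi makes every vertex reachable, giving Bi ~= PCay(P). *)

From Stdlib Require Import List Relations Arith Classical ClassicalEpsilon
  FunctionalExtensionality PropExtensionality.
Import ListNotations.

Lemma sig_eq {A : Type} {P : A -> Prop} (u v : {a | P a}) :
  proj1_sig u = proj1_sig v -> u = v.
Proof. apply eq_sig_hprop. intros; apply proof_irrelevance. Qed.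

Lemma class_representative (V : Type) (E : V -> V -> Prop) :
  equivalence V E ->
  exists rep : V -> V, (forall v, E v (rep v)) /\ (forall v w, E v w -> rep v = rep w).
Proof.
  intros [E_refl E_trans E_sym].
  exists (fun v => epsilon (inhabits v) (E v)). split.
  - intro v. apply epsilon_spec. exists v. apply E_refl.
  - intros v w Evw.
    assert (same_class : E v = E w).
    { apply functional_extensionality. intro x. apply propositional_extensionality.
      split; intro H; eauto. }
    rewrite same_class, (proof_irrelevance _ (inhabits v) (inhabits w)). reflexivity.
Qed.

Section Orientation.
Variables (V : Type) (s t : V -> V).
Hypotheses (s_invol : forall v, s (s v) = v) (t_invol : forall v, t (t v) = v)
  (s_fpf : forall v, s v <> v) (t_fpf : forall v, t v <> v).

Let p (v : V) : V := t (s v).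

Lemma rotation_inj a b : p a = p b -> a = b.
Proof.
  unfold p. intro E. apply (f_equal t) in E. rewrite !t_invol in E.
  apply (f_equal s) in E. rewrite !s_invol in E. exact E.
Qed.

Lemma iter_rotation_reflect n v : Nat.iter n p (s (Nat.iter n p v)) = s v.
Proof.
  induction n as [|n IH]; [reflexivity|].
  rewrite Nat.iter_succ_r, Nat.iter_succ. unfold p at 2 3.
  rewrite s_invol, t_invol. exact IH.
Qed.

(* A reflection never equals a rotation: s v lies in no forward p-orbit of v.
   Steps of size two reduce the claim for n + 2 to the claim for n. *)
Lemma iter_rotation_ne_reflect n v : Nat.iter n p v <> s v.
Proof.
  enough (both : forall n, (forall v, Nat.iter n p v <> s v) /\
                           (forall v, Nat.iter (S n) p v <> s v)) by apply both.
  clear n v. induction n as [|n [IH IH_succ]].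
  - split; intros v; [exact (not_eq_sym (s_fpf v))|apply t_fpf].
  - split; [exact IH_succ|]. intros v E.
    rewrite Nat.iter_succ_r in E. change (t (s (Nat.iter n p (p v))) = s v) in E.
    apply (f_equal t) in E. rewrite t_invol in E.
    apply (f_equal s) in E. rewrite s_invol in E. exact (IH (p v) E).
Qed.

Definition same_orbit (x y : V) : Prop := exists m n, Nat.iter m p x = Nat.iter n p y.

Lemma same_orbit_refl x : same_orbit x x.
Proof. exists 0, 0. reflexivity. Qed.

Lemma same_orbit_sym x y : same_orbit x y -> same_orbit y x.
Proof. intros [m [n E]]. exists n, m. auto. Qed.

Lemma same_orbit_trans x y z : same_orbit x y -> same_orbit y z -> same_orbit x z.
Proof.
  intros [m [n E1]] [a [b E2]]. exists (a + m), (n + b).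
  rewrite !Nat.iter_add, E1, <- E2, <- !Nat.iter_add, Nat.add_comm. reflexivity.
Qed.

Lemma same_orbit_rotation x : same_orbit x (p x).
Proof. exists 1, 0. reflexivity. Qed.

Lemma same_orbit_reflect x y : same_orbit x y -> same_orbit (s x) (s y).
Proof.
  intros [m [n E]]. exists n, m.
  rewrite <- (iter_rotation_reflect m x), <- (iter_rotation_reflect n y), E,
    <- !Nat.iter_add, Nat.add_comm. reflexivity.
Qed.

Lemma iter_rotation_cancel m n a b :
  Nat.iter m p a = Nat.iter n p b ->
  (exists k, Nat.iter k p a = b) \/ (exists k, Nat.iter k p b = a).
Proof.
  revert n a b. induction m as [|m IH]; intros n a b E.
  - right. exists n. auto.
  - destruct n as [|n].
    + left. exists (S m). auto.
    + apply (IH n). apply rotation_inj. exact E.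
Qed.

Lemma not_same_orbit_reflect x : ~ same_orbit x (s x).
Proof.
  intros [m [n E]]. destruct (iter_rotation_cancel _ _ _ _ E) as [[k Ek]|[k Ek]].
  - exact (iter_rotation_ne_reflect k x Ek).
  - apply (iter_rotation_ne_reflect k (s x)). rewrite s_invol. exact Ek.
Qed.

(* x and y lie in the same orbit of the group generated by s and t. *)
Definition dihedral_related (x y : V) : Prop := same_orbit x y \/ same_orbit x (s y).

Lemma dihedral_related_equiv : equivalence V dihedral_related.
Proof.
  split.
  - left. apply same_orbit_refl.
  - intros x y z [Hxy|Hxy] [Hyz|Hyz].
    + left. eapply same_orbit_trans; eauto.
    + right. eapply same_orbit_trans; eauto.
    + right. eapply same_orbit_trans; [exact Hxy|]. apply same_orbit_reflect, Hyz.
    + left. eapply same_orbit_trans; [exact Hxy|]. apply same_orbit_reflect in Hyz.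
      rewrite s_invol in Hyz. exact Hyz.
  - intros x y [Hxy|Hxy].
    + left. apply same_orbit_sym. exact Hxy.
    + right. apply same_orbit_reflect in Hxy. rewrite s_invol in Hxy.
      apply same_orbit_sym. exact Hxy.
Qed.

(* Take F to be, in every dihedral
   orbit, the p-orbit of a chosen representative. *)
Theorem orientation :
  exists F : V -> Prop, (forall v, F (t (s v)) <-> F v) /\ (forall v, F (s v) <-> ~ F v).
Proof.
  destruct (class_representative V dihedral_related dihedral_related_equiv)
    as [rep [rep_related rep_eq]].
  exists (fun v => same_orbit (rep v) v). split.
  - intro v. fold (p v).
    rewrite <- (rep_eq v (p v)) by (left; apply same_orbit_rotation).
    split; intro H; eapply same_orbit_trans; eauto.
    + apply same_orbit_sym, same_orbit_rotation.
    + apply same_orbit_rotation.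
  - intro v. rewrite <- (rep_eq v (s v)) by (right; rewrite s_invol; apply same_orbit_refl).
    destruct (rep_related v) as [Hv|Hv]; split.
    + intros Hsv _. apply (not_same_orbit_reflect v).
      eapply same_orbit_trans; eauto.
    + intro nHv. exfalso. apply nHv, same_orbit_sym. exact Hv.
    + intros _ Hv'. apply (not_same_orbit_reflect v), same_orbit_sym.
      eapply same_orbit_trans; [|exact Hv'].
      apply same_orbit_reflect in Hv. rewrite s_invol in Hv. exact Hv.
    + intros _. apply same_orbit_reflect in Hv. rewrite s_invol in Hv.
      apply same_orbit_sym. exact Hv.
Qed.

End Orientation.

Definition signed_transversal {A U : Type} (i : A -> A) (D : A -> Prop) (h : U -> A) : Prop :=
  (forall u, D (h u)) /\
  (forall a, D a -> exists u, a = h u \/ a = i (h u)) /\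
  (forall u u', h u = h u' -> u = u') /\
  (forall u u', h u <> i (h u')).

Section CommonTransversal.
Variables (A B : Type) (iA : A -> A) (iB : B -> B) (f : A -> B) (g : B -> A).
Hypotheses (iA_invol : forall a, iA (iA a) = a) (iB_invol : forall b, iB (iB b) = b)
  (gf : forall a, g (f a) = a) (fg : forall b, f (g b) = b).

Variable F : A + B -> Prop.
Hypotheses (F_left : forall a, F (inl (iA a)) <-> ~ F (inl a))
  (F_right : forall b, F (inr (iB b)) <-> ~ F (inr b))
  (F_swap : forall a, F (inr (f (iA a))) <-> F (inl a)).

Let U := {a | F (inl a)}.

Lemma transversal_left : signed_transversal iA (fun _ => True) (fun u : U => proj1_sig u).
Proof.
  split; [|split; [|split]].
  - trivial.
  - intros a _. destruct (classic (F (inl a))) as [Ha|Ha].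
    + exists (exist _ a Ha). left. reflexivity.
    + apply F_left in Ha. exists (exist _ (iA a) Ha). right. simpl. now rewrite iA_invol.
  - intros u u'. apply sig_eq.
  - intros [a Ha] [a' Ha'] E. simpl in E. subst a.
    apply F_left in Ha. exact (Ha Ha').
Qed.

Lemma transversal_right :
  signed_transversal iB (fun _ => True) (fun u : U => f (iA (proj1_sig u))).
Proof.
  assert (pick : forall b, F (inr b) -> exists u : U, f (iA (proj1_sig u)) = b).
  { intros b Hb. assert (Ha : F (inl (iA (g b)))) by (apply F_swap; now rewrite iA_invol, fg).
    exists (exist (fun a => F (inl a)) _ Ha). simpl. now rewrite iA_invol, fg. }
  split; [|split; [|split]].
  - trivial.
  - intros b _. destruct (classic (F (inr b))) as [Hb|Hb].
    + destruct (pick b Hb) as [u Hu]. exists u. left. auto.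
    + apply F_right in Hb. destruct (pick _ Hb) as [u Hu]. exists u. right.
      now rewrite Hu, iB_invol.
  - intros [a Ha] [a' Ha'] E. simpl in E. apply sig_eq. simpl.
    apply (f_equal (fun b => iA (g b))) in E. now rewrite !gf, !iA_invol in E.
  - intros [a Ha] [a' Ha'] E. simpl in E.
    apply F_swap in Ha. apply F_swap in Ha'. rewrite E in Ha.
    apply F_right in Ha. exact (Ha Ha').
Qed.

End CommonTransversal.

Lemma common_transversal (A B : Type) (iA : A -> A) (iB : B -> B) (f : A -> B) (g : B -> A) :
  (forall a, iA (iA a) = a) -> (forall b, iB (iB b) = b) ->
  (forall a, iA a <> a) -> (forall b, iB b <> b) ->
  (forall a, g (f a) = a) -> (forall b, f (g b) = b) ->
  exists (U : Type) (hA : U -> A) (hB : U -> B),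
    signed_transversal iA (fun _ => True) hA /\ signed_transversal iB (fun _ => True) hB.
Proof.
  intros iA_invol iB_invol iA_fpf iB_fpf gf fg.
  set (s := fun v : A + B => match v with inl a => inl (iA a) | inr b => inr (iB b) end).
  set (t := fun v : A + B => match v with inl a => inr (f a) | inr b => inl (g b) end).
  assert (s_invol : forall v, s (s v) = v) by (intros [a|b]; unfold s; f_equal; auto).
  assert (t_invol : forall v, t (t v) = v) by (intros [a|b]; unfold t; f_equal; auto).
  assert (s_fpf : forall v, s v <> v)
    by (intros [a|b] E; unfold s in E; injection E; [apply iA_fpf|apply iB_fpf]).
  assert (t_fpf : forall v, t v <> v) by (intros [a|b]; unfold t; discriminate).
  destruct (orientation (A + B) s t s_invol t_invol s_fpf t_fpf) as [F [F_rot F_refl]].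
  exists {a | F (inl a)}, (fun u => proj1_sig u), (fun u => f (iA (proj1_sig u))).
  split; [apply transversal_left|apply (transversal_right A B iA iB f g)]; auto;
    intro x; first [exact (F_refl (inl x)) | exact (F_refl (inr x)) | exact (F_rot (inl x))].
Qed.

Lemma transversal_of_subtype {A U : Type} (i : A -> A) (D : A -> Prop)
  (iD : {x | D x} -> {x | D x}) (h : U -> {x | D x}) :
  (forall x, proj1_sig (iD x) = i (proj1_sig x)) ->
  signed_transversal iD (fun _ => True) h ->
  signed_transversal i D (fun u => proj1_sig (h u)).
Proof.
  intros iD_val [_ [h_cover [h_inj h_ninv]]]. split; [|split; [|split]].
  - intro u. exact (proj2_sig (h u)).
  - intros a Ha. destruct (h_cover (exist D a Ha) I) as [u [E|E]]; exists u;
      [left|right; rewrite <- iD_val]; now rewrite <- E.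
  - intros u u' E. apply h_inj, sig_eq, E.
  - intros u u' E. apply (h_ninv u u'), sig_eq. now rewrite iD_val.
Qed.

Section GroupFacts.
Variables (G : Type) (mul : G -> G -> G) (one : G) (inv : G -> G).
Hypothesis HG : is_group mul one inv.

Lemma inv_inv a : inv (inv a) = a.
Proof.
  destruct HG as [assoc [one_l [one_r [inv_l _]]]].
  rewrite <- (one_r (inv (inv a))), <- (inv_l a), assoc, inv_l. apply one_l.
Qed.

Lemma mul_cancel_l g a b : mul g a = mul g b -> a = b.
Proof.
  destruct HG as [assoc [one_l [_ [inv_l _]]]].
  intro E. apply (f_equal (mul (inv g))) in E. now rewrite !assoc, inv_l, !one_l in E.
Qed.

Lemma inv_one : inv one = one.
Proof. destruct HG as [_ [one_l [_ [_ inv_r]]]]. rewrite <- (one_l (inv one)). apply inv_r. Qed.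

Definition sub_inv (D : G -> Prop) (HD : forall g, D (inv g) <-> D g) (x : {g | D g}) :
  {g | D g} := exist D (inv (proj1_sig x)) (proj2 (HD _) (proj2_sig x)).

Lemma group_transversals (R L : G -> Prop) :
  (forall g, R (inv g) <-> R g) -> (forall g, L (inv g) <-> L g) ->
  equipotent R L -> (forall g, R g \/ L g -> inv g <> g) ->
  exists (U : Type) (rho lam : U -> G),
    signed_transversal inv R rho /\ signed_transversal inv L lam.
Proof.
  intros HR HL [f [g [gf fg]]] Hnoinv.
  destruct (common_transversal _ _ (sub_inv R HR) (sub_inv L HL) f g)
    as [U [hR [hL [TR TL]]]]; auto.
  - intro x. apply sig_eq, inv_inv.
  - intro y. apply sig_eq, inv_inv.
  - intros [x Hx] E. apply (Hnoinv x); [now left|]. exact (f_equal (@proj1_sig _ _) E).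
  - intros [y Hy] E. apply (Hnoinv y); [now right|]. exact (f_equal (@proj1_sig _ _) E).
  - exists U, (fun u => proj1_sig (hR u)), (fun u => proj1_sig (hL u)).
    split; eapply transversal_of_subtype; eauto; reflexivity.
Qed.

End GroupFacts.

Section BiCayleyPresentation.
Variables (G : Type) (mul : G -> G -> G) (one : G) (inv : G -> G).
Hypothesis HG : is_group mul one inv.
Variables (R L S : G -> Prop) (U : Type) (rho lam : U -> G).
Hypotheses (HR : forall g, R (inv g) <-> R g) (HL : forall g, L (inv g) <-> L g)
  (rho_transversal : signed_transversal inv R rho)
  (lam_transversal : signed_transversal inv L lam).

Let assoc : forall a b c, mul a (mul b c) = mul (mul a b) c := proj1 HG.
Let one_r : forall a, mul a one = a := proj1 (proj2 (proj2 HG)).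
Let inv_l : forall a, mul (inv a) a = one := proj1 (proj2 (proj2 (proj2 HG))).
Let inv_r : forall a, mul a (inv a) = one := proj2 (proj2 (proj2 (proj2 HG))).
Let inv_invol : forall a, inv (inv a) = a := inv_inv G mul one inv HG.
Let rho_in : forall u, R (rho u) := proj1 rho_transversal.
Let rho_cover : forall r, R r -> exists u, r = rho u \/ r = inv (rho u) :=
  proj1 (proj2 rho_transversal).
Let lam_in : forall u, L (lam u) := proj1 lam_transversal.
Let lam_cover : forall l, L l -> exists u, l = lam u \/ l = inv (lam u) :=
  proj1 (proj2 lam_transversal).

Local Notation letterB := (letter U {s | S s}).

Definition signed (h : U -> G) (u : U) (x : bool) : G := if x then h u else inv (h u).

(* Letters act on vertices (g, b) of Bi(G,R,L,S): LU u x moves along the signed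
   element of rho (side 0) or lam (side 1); LI s crosses from side 0 to side 1
   along s, or back along s^-1. *)
Definition letter_elt (b : bool) (l : letterB) : G :=
  match l with
  | LU u x => signed (if b then lam else rho) u x
  | LI s => if b then inv (proj1_sig s) else proj1_sig s
  end.

Definition letter_side (b : bool) (l : letterB) : bool :=
  match l with LU _ _ => b | LI _ => negb b end.

Definition bi_step (v : G * bool) (l : letterB) : G * bool :=
  (mul (fst v) (letter_elt (snd v) l), letter_side (snd v) l).

Definition bi_walk (v : G * bool) (w : list letterB) : G * bool := fold_left bi_step w v.

Definition bi_presentation : ppres :=
  {| pX := bool; pU := U; pI := {s | S s};
     phiU := fun _ x => x; phiUinv := fun _ x => x; phiI := fun _ x => negb x;
     rels := fun x r => bi_walk (one, x) r = (one, x) |}.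

Lemma bi_walk_app v w1 w2 : bi_walk v (w1 ++ w2) = bi_walk (bi_walk v w1) w2.
Proof. apply fold_left_app. Qed.

Lemma bi_walk_snoc v w l : bi_walk v (w ++ [l]) = bi_step (bi_walk v w) l.
Proof. apply fold_left_app. Qed.

Lemma bi_walk_transl h g b w :
  bi_walk (mul h g, b) w = (mul h (fst (bi_walk (g, b) w)), snd (bi_walk (g, b) w)).
Proof.
  revert g b. induction w as [|l w IH]; intros g b; [reflexivity|].
  change (bi_walk (bi_step (mul h g, b) l) w =
          (mul h (fst (bi_walk (bi_step (g, b) l) w)), snd (bi_walk (bi_step (g, b) l) w))).
  unfold bi_step at 1 3. cbn [fst snd]. rewrite <- assoc. apply IH.
Qed.

Lemma closed_walk_transl g h b r : bi_walk (g, b) r = (g, b) -> bi_walk (h, b) r = (h, b).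
Proof.
  intro closed.
  assert (Eh : h = mul (mul h (inv g)) g) by now rewrite <- assoc, inv_l, one_r.
  rewrite Eh, bi_walk_transl, closed. simpl. now rewrite <- Eh.
Qed.

Lemma act_bi_walk x w g : act bi_presentation x w = snd (bi_walk (g, x) w).
Proof.
  revert x g. induction w as [|l w IH]; intros x g; [reflexivity|].
  simpl. rewrite (IH _ (mul g (letter_elt x l))). do 2 f_equal.
  destruct l as [u [|]|s]; reflexivity.
Qed.

Lemma bi_step_back v l : bi_step (bi_step v l) (linv l) = v.
Proof.
  destruct v as [g b]. unfold bi_step. simpl. rewrite <- assoc.
  destruct b, l as [u [|]|s]; simpl;
    rewrite ?inv_invol, ?inv_l, ?inv_r, ?one_r; reflexivity.
Qed.

Definition winv (w : list letterB) : list letterB := rev (map linv w).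

Lemma bi_walk_winv v w : bi_walk (bi_walk v w) (winv w) = v.
Proof.
  revert v. induction w as [|l w IH] using rev_ind; intro v; [reflexivity|].
  unfold winv. rewrite map_app, rev_app_distr, bi_walk_app, bi_walk_snoc.
  simpl. rewrite bi_step_back. apply IH.
Qed.

Lemma hstep_walk x0 a b :
  hstep bi_presentation x0 a b -> bi_walk (one, x0) a = bi_walk (one, x0) b.
Proof.
  intros [u v l|u r v Hr]; rewrite !bi_walk_app.
  - simpl. rewrite bi_step_back. reflexivity.
  - f_equal. destruct (bi_walk (one, x0) u) as [g c] eqn:Eu.
    assert (Ec : act bi_presentation x0 u = c) by now rewrite (act_bi_walk _ _ one), Eu.
    simpl in Hr. rewrite Ec in Hr. exact (closed_walk_transl one g c r Hr).
Qed.

Lemma hequiv_cancel x0 w v : hequiv bi_presentation x0 (w ++ winv w ++ v) v.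
Proof.
  revert v. induction w as [|l w IH] using rev_ind; intro v; [apply rst_refl|].
  unfold winv. rewrite map_app, rev_app_distr.
  eapply rst_trans; [|apply (IH v)].
  apply rst_step. rewrite <- app_assoc. apply hs_back.
Qed.

Lemma hequiv_iff_walk x0 a b :
  hequiv bi_presentation x0 a b <-> bi_walk (one, x0) a = bi_walk (one, x0) b.
Proof.
  split.
  - intro H. induction H; [apply hstep_walk; assumption|reflexivity|congruence|congruence].
  - intro E.
    (* winv a ++ b is a closed walk at the endpoint of a, hence a relator there *)
    assert (relator : hstep bi_presentation x0 (a ++ (winv a ++ b) ++ []) (a ++ [])).
    { apply hs_rel. simpl.
      destruct (bi_walk (one, x0) a) as [g c] eqn:Ea.
      rewrite (act_bi_walk _ _ one), Ea. simpl.
      apply (closed_walk_transl g).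
      rewrite bi_walk_app, <- Ea, bi_walk_winv, <- E, Ea. reflexivity. }
    rewrite !app_nil_r in relator.
    eapply rst_trans; [apply rst_sym, rst_step, relator|]. apply hequiv_cancel.
Qed.
Lemma bi_step_adj v l : bi_adj mul R L S v (bi_step v l).
Proof.
  destruct v as [g [|]], l as [u [|]|[s Hs]]; unfold bi_step; simpl.
  - right; left. exists g, (lam u). auto.
  - right; left. exists g, (inv (lam u)). split; [apply HL|]; auto.
  - right; right. exists (mul g (inv s)), s. split; [exact Hs|right].
    rewrite <- assoc, inv_l, one_r. auto.
  - left. exists g, (rho u). auto.
  - left. exists g, (inv (rho u)). split; [apply HR|]; auto.
  - right; right. exists g, s. auto.
Qed.

Lemma adj_bi_step v v' : bi_adj mul R L S v v' -> exists l, bi_step v l = v'.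
Proof.
  assert (back : forall g a, mul (mul g a) (inv a) = g)
    by (intros; now rewrite <- assoc, inv_r, one_r).
  assert (along : forall g b a g', g' = mul g a ->
                  (exists u, a = letter_elt b (LU u true) \/ a = letter_elt b (LU u false)) ->
                  exists l, bi_step (g, b) l = (g', b)).
  { intros g b a g' -> [u [E|E]]; [exists (LU u true)|exists (LU u false)];
      unfold bi_step; simpl; now rewrite E. }
  intros [[g [r [Hr [[-> ->]|[-> ->]]]]]|[[g [r [Hr [[-> ->]|[-> ->]]]]]|
          [g [s [Hs [[-> ->]|[-> ->]]]]]]].
  - apply (along _ _ r); [reflexivity|exact (rho_cover r Hr)].
  - apply (along _ _ (inv r)); [now rewrite back|apply rho_cover, HR, Hr].
  - apply (along _ _ r); [reflexivity|exact (lam_cover r Hr)].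
  - apply (along _ _ (inv r)); [now rewrite back|apply lam_cover, HL, Hr].
  - exists (LI (exist _ s Hs)). reflexivity.
  - exists (LI (exist _ s Hs)). unfold bi_step. simpl. now rewrite back.
Qed.

(* A signed transversal element is never the identity, since h u <> inv (h u). *)
Lemma signed_ne_one (D : G -> Prop) h u x :
  signed_transversal inv D h -> signed h u x <> one.
Proof.
  intros [_ [_ [_ h_ninv]]] E. apply (h_ninv u u).
  assert (E1 : h u = one).
  { destruct x; [exact E|]. rewrite <- (inv_invol (h u)). simpl in E.
    rewrite E. exact (inv_one _ _ _ _ HG). }
  rewrite E1. symmetry. exact (inv_one _ _ _ _ HG).
Qed.

Lemma signed_inj (D : G -> Prop) h u u' x y :
  signed_transversal inv D h -> signed h u x = signed h u' y -> u = u' /\ x = y.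
Proof.
  intros [_ [_ [h_inj h_ninv]]] E. destruct x, y; simpl in E.
  - auto.
  - exfalso. exact (h_ninv _ _ E).
  - exfalso. exact (h_ninv _ _ (eq_sym E)).
  - apply (f_equal inv) in E. rewrite !inv_invol in E. auto.
Qed.

Lemma bi_step_ne v l : bi_step v l <> v.
Proof.
  destruct v as [g b]. unfold bi_step. simpl. intro E. injection E as Eg Eb.
  assert (trivial_elt : letter_elt b l = one).
  { apply (mul_cancel_l _ _ _ _ HG g). rewrite one_r. exact Eg. }
  destruct l as [u x|s].
  - destruct b; [exact (signed_ne_one _ _ _ _ lam_transversal trivial_elt)
                |exact (signed_ne_one _ _ _ _ rho_transversal trivial_elt)].
  - destruct b; discriminate.
Qed.

Lemma bi_step_inj v l l' : l <> l' -> bi_step v l <> bi_step v l'.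
Proof.
  intros Hne E. destruct v as [g b]. unfold bi_step in E. simpl in E. injection E as Eg Eb.
  apply (mul_cancel_l _ _ _ _ HG) in Eg.
  destruct l as [u x|s], l' as [u' y|s']; simpl in Eb.
  - apply Hne. destruct b;
      [destruct (signed_inj _ _ _ _ _ _ lam_transversal Eg)
      |destruct (signed_inj _ _ _ _ _ _ rho_transversal Eg)]; congruence.
  - destruct b; discriminate.
  - destruct b; discriminate.
  - apply Hne. f_equal. apply sig_eq. destruct b; simpl in Eg; [|exact Eg].
    apply (f_equal inv) in Eg. now rewrite !inv_invol in Eg.
Qed.

(* The data of bi_presentation satisfy the axioms of a partite presentation;
   transitivity on X = {0, 1} needs one element of S. *)
Lemma bi_presentation_partite s0 : S s0 -> partite_presentation bi_presentation.
Proof.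
  intro Hs0. split; [exact (inhabits true)|].
  do 2 (split; [reflexivity|]). split; [|split; [|split]].
  - intros s x. apply Bool.negb_involutive.
  - intros s [|]; discriminate.
  - intros x y. destruct (Bool.bool_dec x y) as [E|E].
    + exists []. exact E.
    + exists [LI (exist _ s0 Hs0)]. destruct x, y; simpl; congruence.
  - intros x r closed. rewrite (act_bi_walk _ _ one). exact (f_equal snd closed).
Qed.

Lemma bi_presentation_simple x0 : pcay_simple bi_presentation x0.
Proof.
  split.
  - intros w l. rewrite hequiv_iff_walk, bi_walk_snoc. apply bi_step_ne.
  - intros w l l' Hne. rewrite hequiv_iff_walk, !bi_walk_snoc. apply bi_step_inj, Hne.
Qed.

Section Connected.
Hypothesis Hconn : bi_connected mul R L S.

Lemma bi_walk_reach x0 v : exists w, bi_walk (one, x0) w = v.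
Proof.
  induction (clos_rt_rtn1 _ _ _ _ (Hconn (one, x0) v)) as [|v v' Hadj _ [w Hw]].
  - exists []. reflexivity.
  - destruct (adj_bi_step _ _ Hadj) as [l Hl].
    exists (w ++ [l]). now rewrite bi_walk_snoc, Hw.
Qed.

Lemma bi_presentation_iso x0 : bi_iso_pcay mul R L S bi_presentation x0.
Proof.
  destruct (choice _ (bi_walk_reach x0)) as [word word_spec].
  exists word. split; [|split].
  - intro w. exists (bi_walk (one, x0) w). now rewrite hequiv_iff_walk, word_spec.
  - intros v v'. now rewrite hequiv_iff_walk, !word_spec.
  - intros v v'. split.
    + intro Hadj. destruct (adj_bi_step _ _ Hadj) as [l Hl].
      exists l. now rewrite hequiv_iff_walk, bi_walk_snoc, !word_spec.
    + intros [l H]. rewrite hequiv_iff_walk, bi_walk_snoc, !word_spec in H.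
      rewrite <- H. apply bi_step_adj.
Qed.

End Connected.

End BiCayleyPresentation.

Lemma connected_S_nonempty {G : Type} (mul : G -> G -> G) (R L S : G -> Prop) :
  forall v w, clos_refl_trans _ (bi_adj mul R L S) v w -> snd v <> snd w -> exists s, S s.
Proof.
  intros v w H. induction H as [v w Hadj| |u v w _ IH1 _ IH2]; intro D.
  - destruct Hadj as [[g [r [_ [[-> ->]|[-> ->]]]]]|[[g [r [_ [[-> ->]|[-> ->]]]]]|
                      [g [s [Hs _]]]]]; simpl in D; try congruence; eauto.
  - congruence.
  - destruct (Bool.bool_dec (snd u) (snd v)) as [E|E]; [apply IH2; congruence|auto].
Qed.

Theorem proposition4 (G : Type) (mul : G -> G -> G) (one : G) (inv : G -> G)
  (HG : is_group mul one inv) (R L S : G -> Prop)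
  (HR : forall g, R (inv g) <-> R g)
  (HL : forall g, L (inv g) <-> L g)
  (HRL : equipotent R L)
  (Hnoinv : forall g, R g \/ L g -> inv g <> g)
  (Hconn : bi_connected mul R L S) :
  exists P : ppres,
    partite_presentation P /\ has_two_elements (pX P) /\
    forall x0 : pX P, pcay_simple P x0 /\ bi_iso_pcay mul R L S P x0.
Proof.
  destruct (group_transversals G mul one inv HG R L HR HL HRL Hnoinv)
    as [U [rho [lam [rho_transversal lam_transversal]]]].
  destruct (connected_S_nonempty mul R L S (one, false) (one, true)) as [s0 Hs0];
    [apply Hconn|discriminate|].
  exists (bi_presentation G mul one inv S U rho lam). split; [|split].
  - exact (bi_presentation_partite _ _ _ _ _ _ _ _ _ Hs0).
  - exists true, false. split; [discriminate|intros [|]; auto].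
  - intro x0. split.
    + apply (bi_presentation_simple _ _ _ _ HG R L); assumption.
    + apply bi_presentation_iso; assumption.
Qed.
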